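(* In the setting described in the context, the Dirichlet problem has at most one regular solution: if $u_1,u_2$ are functions that are regular solutions of $\sum_{i=1}^m u_{x_ix_i}+\sum_{k=1}^n\frac{2\alpha_k}{x_k}u_{x_k}=0$ in $\Omega$, continuous on $\overline\Omega$, and both satisfy $u|_\Gamma=\varphi$ on $\overline\Gamma$ and $u|_{x_k=0}=\tau_k(\tilde x_k)$ on $\overline\Gamma_k$ for all $k\in K$, then $u_1=u_2$ on $\overline\Omega$.
   Context: Let $m>2$ and $1\le n\le m$ be integers, $K=\{1,\dots,n\}$, $\alpha=(\alpha_1,\dots,\alpha_n)$ real with $0<2\alpha_k<1$, $\mathbb R_m^{n+}=\{x\in\mathbb R^m:x_1>0,\dots,x_n>0\}$. A regular solution of the equation in a domain is a function with continuous derivatives up to second order there satisfying the equation at every point. $\Gamma$ is a surface in $\mathbb R_m^{n+}$ which together with the hyperplanes $x_1=0,\dots,x_n=0$ bounds a finite domain $\Omega\subset\mathbb R_m^{n+}$; $\Gamma_k$ is the part of $\partial\Omega$ on the hyperplane $x_k=0$. $\Gamma$ is a Lyapunov surface: (i) definite normal at every point; (ii) constants $a,\kappa>0$ with angle between normals at $x,\xi\in\Gamma$ at most $a|x-\xi|^\kappa$; (iii) $\Gamma$ meets the hyperplanes $x_k=0$ at right angles. For $x\in\mathbb R^m$, $\tilde x_k=(x_1,\dots,x_{k-1},x_{k+1},\dots,x_m)$. The data $\varphi\in C(\overline\Gamma)$ and $\tau_k\in C(\overline\Gamma_k)$ are given continuous functions satisfying the matching conditions $\varphi=\tau_k$ on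 $\overline\Gamma\cap\overline\Gamma_k$, $k\in K$. *)

From HB Require Import structures.
From mathcomp Require Import all_boot all_order all_algebra.
From mathcomp Require Import all_classical all_reals all_analysis.
Set Implicit Arguments. Unset Strict Implicit. Unset Printing Implicit Defensive.
Import Order.TTheory GRing.Theory Num.Theory.
Import numFieldNormedType.Exports.
Local Open Scope classical_set_scope.
Local Open Scope ring_scope.

Section Defs.
Variables (R : realType) (m : nat).

(* i-th coordinate of x (coordinates are 0-indexed: x_{i+1} of the paper is [coord x i]) *)
Definition coord (x : 'rV[R]_m) (i : 'I_m) : R := x ord0 i.

Definition ebase (i : 'I_m) : 'rV[R]_m := delta_mx ord0 i.

Definition pd (f : 'rV[R]_m -> R) (i : 'I_m) : 'rV[R]_m -> R :=
  fun x => 'D_(ebase i) f x.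

Definition dotp (x y : 'rV[R]_m) : R := \sum_(i < m) x ord0 i * y ord0 i.
Definition enorm (x : 'rV[R]_m) : R := Num.sqrt (dotp x x).

(* f has continuous partial derivatives up to order two in the open set A
   (a regular function in A) *)
Definition C2_on (A : set 'rV[R]_m) (f : 'rV[R]_m -> R) : Prop :=
  [/\ (forall x, A x -> {for x, continuous f}),
      (forall i x, A x -> derivable f x (ebase i)),
      (forall i x, A x -> {for x, continuous (pd f i)}),
      (forall i j x, A x -> derivable (pd f i) x (ebase j)) &
      (forall i j x, A x -> {for x, continuous (pd (pd f i) j)})].

Definition orthant n (hnm : (n <= m)%N) : set 'rV[R]_m :=
  [set x | forall k : 'I_n, 0 < coord x (widen_ord hnm k)].

Definition bdry (A : set 'rV[R]_m) : set 'rV[R]_m := closure A `\` interior A.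

Definition Gamma_k n (hnm : (n <= m)%N) (Om : set 'rV[R]_m) (k : 'I_n)
  : set 'rV[R]_m :=
  bdry Om `&` [set x | coord x (widen_ord hnm k) = 0].

Definition tilde n (hnm : (n <= m)%N) (k : 'I_n) (x : 'rV[R]_m) : 'rV[R]_m.-1 :=
  col' (widen_ord hnm k) x.

Definition Lop n (hnm : (n <= m)%N) (alpha : 'I_n -> R) (u : 'rV[R]_m -> R)
  (x : 'rV[R]_m) : R :=
  \sum_(i < m) pd (pd u i) i x
  + \sum_(k < n) (2 * alpha k / coord x (widen_ord hnm k))
                   * pd u (widen_ord hnm k) x.

Definition regular_solution n (hnm : (n <= m)%N) (alpha : 'I_n -> R)
  (Om : set 'rV[R]_m) (u : 'rV[R]_m -> R) : Prop :=
  C2_on Om u /\ forall x, Om x -> Lop hnm alpha u x = 0.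

(* nu is a (unit) normal to the set G at the point x: G has a tangent hyperplane
   at x orthogonal to nu, i.e. <nu, xi - x> = o(|xi - x|) as xi -> x in G *)
Definition is_normal (G : set 'rV[R]_m) (x nu : 'rV[R]_m) : Prop :=
  enorm nu = 1 /\
  forall eps : R, 0 < eps -> exists2 del : R, 0 < del &
    forall xi, G xi -> enorm (xi - x) < del ->
      `|dotp nu (xi - x)| <= eps * enorm (xi - x).

Definition lyapunov n (hnm : (n <= m)%N) (G : set 'rV[R]_m) : Prop :=
  exists nu : 'rV[R]_m -> 'rV[R]_m,
  [/\
      (forall x, G x -> is_normal G x (nu x)),
      (exists a kappa : R, [/\ 0 < a, 0 < kappa &
         forall x xi, G x -> G xi ->
           acos (dotp (nu x) (nu xi)) <= a * (enorm (x - xi)) `^ kappa]) &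
      (* (iii) G meets the hyperplanes x_k = 0 at right angles: the normal
         becomes orthogonal to e_k when approaching a point of the closure of
         G lying on x_k = 0 *)
      (forall (k : 'I_n) x0, closure G x0 -> coord x0 (widen_ord hnm k) = 0 ->
         (fun xi => coord (nu xi) (widen_ord hnm k)) @ within G (nbhs x0) --> 0)].

End Defs.

From Pilot Require Import Defs.
From HB Require Import structures.
From mathcomp Require Import all_boot all_order all_algebra.
From mathcomp Require Import all_classical all_reals all_analysis.
From mathcomp Require Import lra.

Set Implicit Arguments.
Unset Strict Implicit.
Unset Printing Implicit Defensive.
Import Order.TTheory GRing.Theory Num.Theory.
Import numFieldNormedType.Exports.
Local Open Scope classical_set_scope.
Local Open Scope ring_scope.

(** The operator [Lop] has no zero-order term, and its first-order coefficients
    2 alpha_k / x_k are positive in the orthant.  Hence, if L w >= 0 in Omega,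
    then for eps > 0 the function w + eps x_1 has no interior maximum: there its
    gradient vanishes, so d_1 w = -eps, and its pure second derivatives are
    nonpositive, whence L w <= -2 alpha_1 eps / x_1 < 0.  The maximum over the
    compact closure is thus reached on the boundary, and for small eps this gives
    the weak maximum principle.  Applied to u1 - u2 and u2 - u1, which solve the
    equation (L is linear) and vanish on the boundary, it yields u1 = u2. *)

Lemma derive_at_local_max (R : realType) (F f : R -> R) (d : R) :
  0 < d ->
  (forall t : R, `|t| < d -> is_derive t 1 F (f t)) ->
  (forall t : R, `|t| < d -> F t <= F 0) ->
  derivable f 0 1 ->
  f 0 = 0 /\ 'D_1 f 0 <= 0.
Proof.
move=> d0 dF Fmax df.
have itv t : t \in `]-d, d[ -> `|t| < d by rewrite in_itv /= ltr_norml.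
have f0 : f 0 = 0.
  have dF0 : is_derive (0 : R) 1 F 0.
    apply: (@derive1_at_max _ F (- d) d).
    - lra.
    - by move=> t /itv /dF [].
    - by rewrite in_itv /=; apply/andP; split; lra.
    - by move=> t /itv /Fmax.
  have := dF 0; rewrite normr0 => /(_ d0) dF0'.
  by move: dF0' dF0 => [_ <-] [_ ->].
split=> //; rewrite leNgt; apply/negP => f'0.
(* f > 0 on some ]0, h], so F h > F 0 by the mean value theorem *)
have [e /= e0 fpos] :=
  @cvgr_gt R R (0:R)^' (dnbhs_filter _) _ ('D_1 f 0) df 0 f'0.
set h := Num.min e d / 2.
have h0 : 0 < h by rewrite /h divr_gt0 // lt_min e0 d0.
have [he hd] : h < e /\ h < d.
  have : Num.min e d <= e /\ Num.min e d <= d by rewrite !ge_min !lexx orbT.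
  by rewrite /h; lra.
have lt_d t : t \in `[0, h] -> `|t| < d.
  by rewrite in_itv /= => /andP[t0 th]; rewrite ger0_norm //; lra.
have dF_in t : t \in `]0, h[ -> is_derive t 1 F (f t).
  by rewrite in_itv /= => /andP[t0 th]; apply/dF/lt_d; rewrite in_itv /= !ltW.
have cF : {within `[0, h], continuous F}.
  by apply: derivable_within_continuous => t /lt_d /dF [].
have [c] := MVT h0 dF_in cF.
rewrite in_itv /= => /andP[c0 ch] FhF0.
have fc : 0 < f c.
  have := fpos c; rewrite /ball_ /= sub0r normrN gtr0_norm //.
  move=> /(_ (lt_trans ch he)); rewrite gt_eqF // => /(_ isT).
  by rewrite f0 subr0 addr0 [_%:A]mulr1 pmulr_rgt0 // invr_gt0.
have := Fmax h; rewrite gtr0_norm // => /(_ hd).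
move: FhF0; rewrite subr0; nra.
Qed.

Section DirectionalDerivative.
Variables (R : realType) (V W : normedModType R).

Lemma difference_quotient_along_line (g : V -> W) (y e : V) (t : R) :
  (fun h : R => h^-1 *: (((fun s : R => g (s *: e + y)) \o shift t) (h *: 1)
                          - g (t *: e + y)))
  = (fun h : R => h^-1 *: ((g \o shift (t *: e + y)) (h *: e) - g (t *: e + y))).
Proof. by apply: funext => h /=; rewrite [h *: 1]mulr1 scalerDl addrA. Qed.

Lemma derive_along_line (g : V -> W) (y e : V) (t : R) :
  'D_1 (fun s : R => g (s *: e + y)) t = 'D_e g (t *: e + y).
Proof. by rewrite /derive difference_quotient_along_line. Qed.

Lemma derivable_along_line (g : V -> W) (y e : V) (t : R) :
  derivable (fun s : R => g (s *: e + y)) t 1 <-> derivable g (t *: e + y) e.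
Proof. by rewrite /derivable difference_quotient_along_line. Qed.

End DirectionalDerivative.

Lemma directional_local_max (R : realType) (V : normedModType R)
    (g : V -> R) (y e : V) (c d : R) :
  0 < d ->
  (forall t : R, `|t| < d -> derivable g (t *: e + y) e) ->
  derivable ('D_e g) y e ->
  (forall t : R, `|t| < d -> g (t *: e + y) + c * t <= g y) ->
  'D_e g y = - c /\ 'D_e ('D_e g) y <= 0.
Proof.
move=> d0 dg ddg gmax.
have y0 : 0 *: e + y = y by rewrite scale0r add0r.
pose F (t : R) := g (t *: e + y) + c * t.
pose f (t : R) := 'D_e g (t *: e + y) + c.
have dF (t : R) : `|t| < d -> is_derive t 1 F (f t).
  move=> /dg /(derivable_along_line g y e t).2 dgt.
  apply: is_deriveD.
    by apply: DeriveDef => //; rewrite derive_along_line.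
  by rewrite -[c in is_derive _ _ _ c]mulr1; apply: is_deriveZ.
have dDg : derivable ('D_e g \o (fun t : R => t *: e + y)) 0 1.
  by apply/(derivable_along_line ('D_e g) y e 0); rewrite y0.
have df : derivable f 0 1 := derivableD dDg (derivable_cst c (0 : R) 1).
have [|f0 f'0] := derive_at_local_max d0 dF _ df.
  by move=> t /gmax; rewrite /F y0 mulr0 addr0.
split; first by apply/eqP; rewrite -addr_eq0; move: f0; rewrite /f y0 => ->.
move: f'0; rewrite /f deriveD //.
by rewrite derive_cst addr0 (derive_along_line ('D_e g) y e 0) y0.
Qed.

Lemma closure_sub_closed (T : topologicalType) (A B : set T) :
  closed B -> A `<=` B -> closure A `<=` B.
Proof. by move=> cB AB; rewrite closureE; apply: smallest_sub. Qed.

Lemma open_line (R : realType) (V : normedModType R) (A : set V) (y e : V) :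
  open A -> A y -> exists2 d : R, 0 < d & forall t : R, `|t| < d -> A (t *: e + y).
Proof.
move=> oA Ay; have /nbhs_ballP [r /= r0 yrA] : nbhs y A by apply: open_nbhs_nbhs.
have e1 : 0 < `|e| + 1 by rewrite ltr_wpDl.
exists (r / (`|e| + 1)) => [|t]; first by rewrite divr_gt0.
rewrite ltr_pdivlMr // => te; apply: yrA.
rewrite -ball_normE /ball_ /= opprD addrCA subrr addr0 normrN normrZ.
by apply: le_lt_trans te; rewrite ler_wpM2l //; lra.
Qed.

Section Coordinates.
Variables (R : realType) (m : nat).
Implicit Types (x y : 'rV[R]_m) (A : set 'rV[R]_m).

Lemma coord_line (i j : 'I_m) (t : R) y :
  Defs.coord (t *: ebase R i + y) j = t * (j == i)%:R + Defs.coord y j.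
Proof. by rewrite /Defs.coord /ebase !mxE eqxx. Qed.

Lemma compact_closure_bounded A : bounded_set A -> compact (closure A).
Proof.
move=> [M [Mreal AM]]; apply: bounded_closed_compact; last exact: closed_closure.
exists M; split => // N MN; apply: closure_sub_closed (AM N MN).
exact: (continuous_closedP _).1 (@norm_continuous _ _) _ (@closed_le _ N).
Qed.

Lemma closure_orthant_coord_ge0 n (hnm : (n <= m)%N) A (k : 'I_n) x :
  A `<=` orthant hnm -> closure A x -> 0 <= Defs.coord x (widen_ord hnm k).
Proof.
set j := widen_ord hnm k => Aorth.
apply: (@closure_sub_closed _ _ [set z | 0 <= Defs.coord z j]).
  exact: (continuous_closedP _).1
    (@coord_continuous R 1 m ord0 j) _ (@closed_ge _ 0).
by move=> z /Aorth /(_ k) /ltW.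
Qed.

Lemma closure_orthant_or_face n (hnm : (n <= m)%N) A x :
  A `<=` orthant hnm -> closure A x ->
  orthant hnm x \/ exists k : 'I_n, Defs.coord x (widen_ord hnm k) = 0.
Proof.
move=> Aorth Ax; have [|/existsNP [k xk]] := pselect (orthant hnm x); first by left.
right; exists k; apply/eqP.
rewrite eq_le (closure_orthant_coord_ge0 k Aorth Ax) andbT.
by rewrite leNgt; apply/negP.
Qed.

End Coordinates.

Section TwiceDerivable.
Variables (R : realType) (m : nat).
Implicit Types (f g : 'rV[R]_m -> R) (A : set 'rV[R]_m).

(* Only the pure second derivatives [pd (pd f i) i] occur in [Lop]. *)
Definition twice_derivable_on A f : Prop :=
  (forall i x, A x -> derivable f x (ebase R i)) /\
  (forall i x, A x -> derivable (pd f i) x (ebase R i)).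

Lemma C2_on_twice_derivable A f : C2_on A f -> twice_derivable_on A f.
Proof. by case=> _ df _ ddf _; split => i x Ax; [apply: df | apply: ddf]. Qed.

Lemma near_pdB A f g i x : open A -> A x ->
  (forall z, A z -> derivable f z (ebase R i)) ->
  (forall z, A z -> derivable g z (ebase R i)) ->
  \near x, pd (f - g) i x = pd f i x - pd g i x.
Proof.
move=> oA Ax df dg; near=> z; apply: deriveB; [apply: df | apply: dg]; near: z.
all: exact: open_nbhs_nbhs.
Unshelve. all: by end_near. Qed.

Lemma twice_derivable_onB A f g : open A ->
  twice_derivable_on A f -> twice_derivable_on A g -> twice_derivable_on A (f - g).
Proof.
move=> oA [df ddf] [dg ddg]; split => i x Ax.
  by apply: derivableB; [apply: df | apply: dg].
apply: (@near_eq_derivable _ _ _ (pd f i - pd g i)); last first.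
  by apply: derivableB; [apply: ddf | apply: ddg].
by apply: filterS (near_pdB oA Ax (df i) (dg i)) => z ->.
Qed.

Lemma pd_pdB A f g i x : open A ->
  twice_derivable_on A f -> twice_derivable_on A g -> A x ->
  pd (pd (f - g) i) i x = pd (pd f i) i x - pd (pd g i) i x.
Proof.
move=> oA [df ddf] [dg ddg] Ax.
rewrite /pd (near_eq_derive _ (near_pdB oA Ax (df i) (dg i))).
by rewrite deriveB; [| apply: ddf | apply: ddg].
Qed.

Lemma LopB n (hnm : (n <= m)%N) (alpha : 'I_n -> R) A f g x : open A ->
  twice_derivable_on A f -> twice_derivable_on A g -> A x ->
  Lop hnm alpha (f - g) x = Lop hnm alpha f x - Lop hnm alpha g x.
Proof.
move=> oA tf tg Ax; rewrite /Lop opprD addrACA -!sumrB.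
congr (_ + _); apply: eq_bigr => i _; first exact: (pd_pdB i oA tf tg Ax).
case: tf tg => [df _] [dg _].
by rewrite /pd deriveB ?mulrBr; [| apply: df | apply: dg].
Qed.

End TwiceDerivable.

Section WeakMaximumPrinciple.
Variables (R : realType) (m n : nat) (hnm : (n <= m)%N) (alpha : 'I_n -> R).
Hypothesis alpha_gt0 : forall k, 0 < 2 * alpha k.
Variable Om : set 'rV[R]_m.
Hypotheses (Om_open : open Om) (Om_orthant : Om `<=` orthant hnm).

Lemma widen_ord_eq (k k' : 'I_n) :
  (widen_ord hnm k == widen_ord hnm k') = (k == k').
Proof. by rewrite -val_eqE /= val_eqE. Qed.

Lemma Lop_lt0_at_perturbed_max w (k0 : 'I_n) (eps : R) y :
  twice_derivable_on Om w -> 0 < eps -> Om y ->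
  (forall z, Om z -> w z + eps * Defs.coord z (widen_ord hnm k0)
                     <= w y + eps * Defs.coord y (widen_ord hnm k0)) ->
  Lop hnm alpha w y < 0.
Proof.
move=> [dw ddw] eps0 Oy ymax.
have crit i :
    pd w i y = - (eps * (widen_ord hnm k0 == i)%:R) /\ pd (pd w i) i y <= 0.
  have [d d0 dOm] := open_line (ebase R i) Om_open Oy.
  apply: (directional_local_max d0) => [t /dOm/dw //||t /dOm/ymax].
    exact: ddw.
  by rewrite coord_line; lra.
have first_order : \sum_(k < n) 2 * alpha k / Defs.coord y (widen_ord hnm k)
                                 * pd w (widen_ord hnm k) y
                   = - (2 * alpha k0 / Defs.coord y (widen_ord hnm k0) * eps).
  rewrite (bigD1 k0) //= big1 => [|k k0k]; rewrite (crit _).1 widen_ord_eq.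
    by rewrite eqxx mulr1 mulrN addr0.
  by rewrite eq_sym (negbTE k0k) mulr0 oppr0 mulr0.
have second_order : \sum_(i < m) pd (pd w i) i y <= 0.
  by apply: sumr_le0 => i _; exact: (crit i).2.
have : 0 < 2 * alpha k0 / Defs.coord y (widen_ord hnm k0) * eps.
  by rewrite mulr_gt0 // divr_gt0 //; exact: Om_orthant.
by rewrite /Lop first_order; lra.
Qed.

Lemma weak_maximum_principle w : (0 < n)%N -> bounded_set Om ->
  twice_derivable_on Om w -> (forall x, Om x -> 0 <= Lop hnm alpha w x) ->
  {within closure Om, continuous w} ->
  (forall x, closure Om x -> ~ Om x -> w x <= 0) ->
  forall x, closure Om x -> w x <= 0.
Proof.
move=> n_gt0 Om_bdd tw Lw_ge0 wc w_bdry x0 Ox0; rewrite leNgt; apply/negP => wx0.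
pose k0 : 'I_n := Ordinal n_gt0.
pose q (z : 'rV[R]_m) := Defs.coord z (widen_ord hnm k0).
have q_ge0 z : closure Om z -> 0 <= q z.
  exact: (closure_orthant_coord_ge0 k0 Om_orthant).
have K := compact_closure_bounded Om_bdd.
have Kne : closure Om !=set0 by exists x0.
have qc : {within closure Om, continuous q}.
  by apply: continuous_subspaceT => z; exact: coord_continuous.
have [xM /set_mem OxM qmax] := EVT_max_rV Kne K qc.
set eps := w x0 / (q xM + 1).
have qM1 : 0 < q xM + 1 by rewrite ltr_wpDl // q_ge0.
have eps0 : 0 < eps by rewrite divr_gt0.
have eps_qM : eps * q xM < w x0.
  by rewrite /eps mulrAC ltr_pdivrMr // ltr_pM2l //; lra.
pose v (z : 'rV[R]_m) := w z + eps * q z.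
have vc : {within closure Om, continuous v}.
  have -> : v = w + eps \*: q by [].
  by move=> z; apply: continuousD; [exact: wc | apply: continuousZr; exact: qc].
have [y /set_mem Oy' vmax] := EVT_max_rV Kne K vc.
have Oy : Om y.
  apply: contrapT => nOy; have := vmax x0 (mem_set Ox0); rewrite /v.
  have := w_bdry y Oy' nOy.
  have : eps * q y <= eps * q xM.
    by apply: ler_wpM2l; [exact: ltW | apply/qmax/mem_set].
  have : 0 <= eps * q x0 by apply: mulr_ge0; [exact: ltW | exact: q_ge0].
  lra.
have := Lw_ge0 y Oy; rewrite leNgt => /negP; apply.
apply: (Lop_lt0_at_perturbed_max (k0 := k0) tw eps0 Oy) => z Oz.
by apply: vmax; apply/mem_set/subset_closure.
Qed.

Lemma comparison_principle u1 u2 : (0 < n)%N -> bounded_set Om ->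
  regular_solution hnm alpha Om u1 -> regular_solution hnm alpha Om u2 ->
  {within closure Om, continuous u1} -> {within closure Om, continuous u2} ->
  (forall x, closure Om x -> ~ Om x -> u1 x <= u2 x) ->
  forall x, closure Om x -> u1 x <= u2 x.
Proof.
move=> n_gt0 Om_bdd [/C2_on_twice_derivable t1 L1] [/C2_on_twice_derivable t2 L2].
move=> c1 c2 u12 x Ox; rewrite -subr_le0.
have t12 := twice_derivable_onB Om_open t1 t2.
apply: (weak_maximum_principle n_gt0 Om_bdd t12) => //.
- by move=> z Oz; rewrite (LopB _ _ Om_open t1 t2 Oz) L1 // L2 // subrr.
- by move=> z; exact: (continuousB (c1 z) (c2 z)).
- by move=> z Oz nOz; rewrite subr_le0; exact: u12.
Qed.

End WeakMaximumPrinciple.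

Theorem theorem5 (R : realType) (m n : nat) (hm : (2 < m)%N) (hn1 : (1 <= n)%N)
  (hnm : (n <= m)%N) (alpha : 'I_n -> R)
  (halpha : forall k, 0 < 2 * alpha k /\ 2 * alpha k < 1)
  (Om Gam : set 'rV[R]_m)
  (* Omega is a finite (bounded) domain in R_m^{n+} *)
  (hOm_open : open Om) (hOm_conn : connected Om) (hOm_ne : Om !=set0)
  (hOm_bdd : bounded_set Om) (hOm_orth : Om `<=` orthant hnm)
  (* Gamma is the part of the boundary of Omega lying in R_m^{n+}; the rest of
     the boundary lies on the hyperplanes x_k = 0 *)
  (hGam : Gam = bdry Om `&` orthant hnm)
  (hLyap : lyapunov hnm Gam)
  (phi : 'rV[R]_m -> R) (tau : 'I_n -> 'rV[R]_m.-1 -> R)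
  (hphi : {within closure Gam, continuous phi})
  (htau : forall k, {within tilde hnm k @` closure (Gamma_k hnm Om k),
                      continuous tau k})
  (hmatch : forall k x, closure Gam x -> closure (Gamma_k hnm Om k) x ->
              phi x = tau k (tilde hnm k x))
  (u1 u2 : 'rV[R]_m -> R)
  (hu1 : regular_solution hnm alpha Om u1)
  (hu2 : regular_solution hnm alpha Om u2)
  (hc1 : {within closure Om, continuous u1})
  (hc2 : {within closure Om, continuous u2})
  (hG1 : forall x, closure Gam x -> u1 x = phi x)
  (hG2 : forall x, closure Gam x -> u2 x = phi x)
  (hK1 : forall k x, closure (Gamma_k hnm Om k) x -> u1 x = tau k (tilde hnm k x))
  (hK2 : forall k x, closure (Gamma_k hnm Om k) x -> u2 x = tau k (tilde hnm k x)) :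
  forall x, closure Om x -> u1 x = u2 x.
Proof.
have alpha_gt0 k : 0 < 2 * alpha k := (halpha k).1.
have u12_bdry z : closure Om z -> ~ Om z -> u1 z = u2 z.
  move=> Oz nOz; have bdry_z : bdry Om z by split=> // /interior_subset.
  have [orth_z | [k zk]] := closure_orthant_or_face hOm_orth Oz.
    have Gz : Gam z by rewrite hGam.
    by rewrite hG1 ?hG2 //; exact: subset_closure.
  have Gkz : Gamma_k hnm Om k z by [].
  by rewrite (hK1 k) ?(hK2 k) //; exact: subset_closure.
move=> x Ox; apply/le_anti/andP; split.
all: apply: (comparison_principle alpha_gt0 hOm_open hOm_orth hn1 hOm_bdd) => //.
all: by move=> z Oz nOz; rewrite u12_bdry.
Qed.
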